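(* Let $(\alpha,\beta)$ be an admissible, non-null pair and assume there is no $x\in(0,1)$ with $\pi_x(\alpha)=\pi_x(\beta)$. Let $a\in(1,2]$ and let $p\in[1-1/a,1/a]$ be such that $f_{(a,p,+)}(\pi_{1/a}(\omega))=\pi_{1/a}(S\omega)$ for all $\omega\in\Omega_{(\alpha,\beta,+)}$. Then $\Omega_{(\alpha,\beta,+)}\subseteq\Omega_{(a,p,+)}$, where $\Omega_{(a,p,+)}=\tau_{(a,p,+)}([0,1])$.
   Context: For $1<a\le2$, $1-\frac1a\le p\le\frac1a$: $f_{(a,p,+)}(x)=ax$ if $x<p$ and $ax+(1-a)$ if $x\ge p$, on $[0,1]$. $\Omega=\{0,1\}^\infty$ (infinite binary strings $\omega_0\omega_1\cdots$). With $I_0=[0,p)$, $I_1=[p,1]$, the itinerary $\tau_{(a,p,+)}(x)=\omega$ has $\omega_n=0$ if $f_{(a,p,+)}^n(x)\in I_0$ and $\omega_n=1$ if $f_{(a,p,+)}^n(x)\in I_1$. $S$ is the left shift, $\preceq$ the lexicographic order with intervals $[\alpha,\beta]=\{\omega:\alpha\preceq\omega\preceq\beta\}$ and half-open analogues. $(\alpha,\beta)$ is admissible if $\alpha_0=0,\alpha_1=1,\beta_0=1,\beta_1=0$ and $S^n\alpha\notin(\alpha,\beta]$, $S^n\beta\notin[\alpha,\beta)$ for all $n\ge0$. $\Omega_{(\alpha,\beta,-)}=\{\omega:S^n\omega\notin(\alpha,\beta]\ \forall n\ge0\}$, $\Omega_{(\alpha,\beta,+)}=\{\omega:S^n\omega\notin[\alpha,\beta)\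 \forall n\ge0\}$, $\Omega_{(\alpha,\beta)}$ their union. With $\Gamma_n=\{\omega_0\cdots\omega_n:\omega\in\Gamma\}$, $h(\Gamma)=\limsup_n\frac1n\ln|\Gamma_n|$, the pair is non-null if $h(\Omega_{(\alpha,\beta)})>0$. Projection: $\pi_x(\omega)=(1-x)\sum_{k\ge0}\omega_kx^k$. *)

From Stdlib Require Import Reals Lra List Classical ClassicalEpsilon.
From Coquelicot Require Import Coquelicot.
Open Scope R_scope.

(* Infinite binary strings omega_0 omega_1 ... ; true = symbol 1, false = 0. *)
Definition Omega := nat -> bool.

Definition S (w : Omega) : Omega := fun n => w (Datatypes.S n).

Definition lex_lt (w v : Omega) : Prop :=
  exists k, (forall i, (i < k)%nat -> w i = v i) /\ w k = false /\ v k = true.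
Definition lex_le (w v : Omega) : Prop := lex_lt w v \/ (forall i, w i = v i).

Definition in_oc (al be w : Omega) : Prop := lex_lt al w /\ lex_le w be.
Definition in_co (al be w : Omega) : Prop := lex_le al w /\ lex_lt w be.

Definition admissible (al be : Omega) : Prop :=
  al 0%nat = false /\ al 1%nat = true /\ be 0%nat = true /\ be 1%nat = false /\
  (forall n, ~ in_oc al be (Nat.iter n S al)) /\
  (forall n, ~ in_co al be (Nat.iter n S be)).

Definition Omega_minus (al be : Omega) (w : Omega) : Prop :=
  forall n, ~ in_oc al be (Nat.iter n S w).
Definition Omega_plus (al be : Omega) (w : Omega) : Prop :=
  forall n, ~ in_co al be (Nat.iter n S w).
Definition Omega_ab (al be : Omega) (w : Omega) : Prop :=
  Omega_minus al be w \/ Omega_plus al be w.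

Fixpoint all_words (n : nat) : list (list bool) :=
  match n with
  | O => nil :: nil
  | Datatypes.S m => map (cons false) (all_words m) ++ map (cons true) (all_words m)
  end.

Definition is_prefix (w : list bool) (v : Omega) : Prop :=
  forall i, (i < length w)%nat -> nth i w false = v i.

(* |Gamma_n| : number of words omega_0 ... omega_n (length n+1) realised in Gamma *)
Definition card_Gamma (G : Omega -> Prop) (n : nat) : nat :=
  length (filter (fun w =>
            if excluded_middle_informative (exists v, G v /\ is_prefix w v)
            then true else false)
          (all_words (Datatypes.S n))).

Definition entropy (G : Omega -> Prop) : Rbar :=
  LimSup_seq (fun n => / INR n * ln (INR (card_Gamma G n))).

Definition non_null (al be : Omega) : Prop :=
  Rbar_lt (Finite 0) (entropy (Omega_ab al be)).

Definition b2R (b : bool) : R := if b then 1 else 0.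
Definition proj (x : R) (w : Omega) : R :=
  (1 - x) * Series (fun k => b2R (w k) * x ^ k).

Definition f_plus (a p x : R) : R :=
  if Rlt_dec x p then a * x else a * x + (1 - a).

Definition tau_plus (a p x : R) : Omega :=
  fun n => if Rlt_dec (Nat.iter n (f_plus a p) x) p then false else true.

Definition Omega_ap_plus (a p : R) (w : Omega) : Prop :=
  exists x, 0 <= x <= 1 /\ forall n, tau_plus a p x n = w n.

(* Since [pi_x(w) = (1 - x) w_0 + x pi_x(S w)], at [x = 1/a] we get
   [a pi(w) = (a - 1) w_0 + pi(S w)].  The two branches of [f_(a,p,+)] differ
   by [a - 1 <> 0], so [f(pi w) = pi(S w)] forces [pi(w)] into [I_(w_0)].
   On a shift-invariant set the conjugacy iterates, so the itinerary of
   [pi(w)] is [w] itself. *)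

From Stdlib Require Import Reals Lra Lia.
From Coquelicot Require Import Coquelicot.
Open Scope R_scope.

Lemma iter_S_apply n (w : Omega) k : Nat.iter n S w k = w (n + k)%nat.
Proof.
  revert k; induction n as [|n IH]; intro k; simpl; auto.
  unfold S at 1; rewrite IH; f_equal; lia.
Qed.

Lemma iter_S_shift n (w : Omega) : Nat.iter n S (S w) = Nat.iter (Datatypes.S n) S w.
Proof. induction n as [|n IH]; simpl; auto; now rewrite IH. Qed.

Lemma Omega_plus_shift al be w : Omega_plus al be w -> Omega_plus al be (S w).
Proof. intros H n; rewrite iter_S_shift; apply H. Qed.

Section Projection.

Variable x : R.
Hypothesis x_in_01 : 0 < x < 1.

Lemma is_series_geom_01 : is_series (fun n => x ^ n) (/ (1 - x)).
Proof. apply is_series_geom; rewrite Rabs_pos_eq; lra. Qed.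

Lemma digit_term_bounds (w : Omega) n : 0 <= b2R (w n) * x ^ n <= x ^ n.
Proof. pose proof (pow_le x n); destruct (w n); simpl; lra. Qed.

Lemma ex_series_digits (w : Omega) : ex_series (fun k => b2R (w k) * x ^ k).
Proof.
  apply (@ex_series_le R_AbsRing R_CompleteNormedModule) with (b := fun k => x ^ k).
  - intro n; pose proof (digit_term_bounds w n).
    unfold norm; simpl; unfold abs; simpl; rewrite Rabs_pos_eq; lra.
  - exists (/ (1 - x)); apply is_series_geom_01.
Qed.

Lemma proj_cons (w : Omega) : proj x w = (1 - x) * b2R (w 0%nat) + x * proj x (S w).
Proof.
  unfold proj; rewrite Series_incr_1 by apply ex_series_digits.
  replace (Series (fun k => b2R (w (Datatypes.S k)) * x ^ Datatypes.S k))
    with (x * Series (fun n => b2R (S w n) * x ^ n)).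
  - simpl; ring.
  - rewrite <- Series_scal_l; apply Series_ext; intro n; unfold S; simpl; ring.
Qed.

Lemma proj_bounds (w : Omega) : 0 <= proj x w <= 1.
Proof.
  unfold proj; split.
  - apply Rmult_le_pos; [lra|].
    replace 0 with (Series (fun n => 0 * x ^ n)) by (rewrite Series_scal_l; ring).
    apply Series_le; [|apply ex_series_digits].
    intro n; pose proof (digit_term_bounds w n); lra.
  - assert (Hle : Series (fun k => b2R (w k) * x ^ k) <= / (1 - x)).
    { rewrite <- (is_series_unique _ _ is_series_geom_01).
      apply Series_le; [apply digit_term_bounds | eexists; apply is_series_geom_01]. }
    apply Rmult_le_compat_l with (r := 1 - x) in Hle; [|lra].
    rewrite Rinv_r in Hle; lra.
Qed.

End Projection.

Lemma inv_in_01 a : 1 < a -> 0 < / a < 1.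
Proof.
  intro Ha; split; [apply Rinv_0_lt_compat; lra|].
  rewrite <- Rinv_1; apply Rinv_lt_contravar; lra.
Qed.

Lemma conjugacy_first_symbol a p (w : Omega) :
  1 < a ->
  f_plus a p (proj (/ a) w) = proj (/ a) (S w) ->
  (if Rlt_dec (proj (/ a) w) p then false else true) = w 0%nat.
Proof.
  intros Ha Hf.
  assert (Hcons : a * proj (/ a) w = (a - 1) * b2R (w 0%nat) + proj (/ a) (S w)).
  { rewrite (proj_cons (/ a) (inv_in_01 a Ha) w); field; lra. }
  unfold f_plus in Hf.
  destruct (w 0%nat), (Rlt_dec (proj (/ a) w) p); simpl in Hcons; auto; lra.
Qed.

Section Conjugacy.

Variables (a p : R) (G : Omega -> Prop).
Hypothesis a_gt1 : 1 < a.
Hypothesis G_shift : forall w, G w -> G (S w).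
Hypothesis f_conj : forall w, G w -> f_plus a p (proj (/ a) w) = proj (/ a) (S w).

Lemma G_iter_S n w : G w -> G (Nat.iter n S w).
Proof. induction n as [|n IH]; simpl; auto. Qed.

Lemma iter_f_proj n w :
  G w -> Nat.iter n (f_plus a p) (proj (/ a) w) = proj (/ a) (Nat.iter n S w).
Proof.
  intro Gw; induction n as [|n IH]; simpl; auto.
  rewrite IH; apply f_conj, G_iter_S, Gw.
Qed.

Lemma tau_plus_proj w n : G w -> tau_plus a p (proj (/ a) w) n = w n.
Proof.
  intro Gw; unfold tau_plus; rewrite iter_f_proj by exact Gw.
  rewrite (conjugacy_first_symbol _ _ _ a_gt1 (f_conj _ (G_iter_S n w Gw))).
  rewrite iter_S_apply; f_equal; lia.
Qed.

End Conjugacy.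

Theorem lemma3 (al be : Omega) (a p : R) :
  admissible al be ->
  non_null al be ->
  ~ (exists x, 0 < x < 1 /\ proj x al = proj x be) ->
  1 < a <= 2 ->
  1 - / a <= p <= / a ->
  (forall w, Omega_plus al be w ->
     f_plus a p (proj (/ a) w) = proj (/ a) (S w)) ->
  forall w, Omega_plus al be w -> Omega_ap_plus a p w.
Proof.
  intros _ _ _ Ha _ Hf w Hw.
  exists (proj (/ a) w); split.
  - apply proj_bounds, inv_in_01; lra.
  - intro n; apply (tau_plus_proj a p (Omega_plus al be)); auto; [lra|].
    apply Omega_plus_shift.
Qed.
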